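(* Let $\mapsto_S$ be the indexed small-step head-reduction relation on legal top-level terms and $\mapsto_T$ the named small-step head-reduction relation on pure $\lambda$-terms, with reflexive–transitive closures $\mapsto_S^*$, $\mapsto_T^*$. Then: (1) for legal top-level terms $t, t'$, $t \mapsto_S^* t'$ implies $t^* \mapsto_T^* t'^*$; (2) for pure $\lambda$-terms $v, v'$, $v \mapsto_T^* v'$ implies $v^\# \mapsto_S^* v'^\#$; (3) for every legal top-level term $t$, $t \mapsto_S^* t^{*\#}$, and for every pure $\lambda$-term $v$, $v^{\#*} = v$.
   Context: Pure $\lambda$-terms: $v ::= x \mid v\,v \mid \lambda x.v$, with capture-avoiding substitution $v[v'/x]$. Indexed semantics $\mapsto_S$. Indices $i ::= \mathrm{zero} \mid \mathrm{succ}(i)$. Terms $v ::= x \mid v\,v \mid \lambda x.v \mid i$. Top-level terms $t ::= v \mid \lambda.t$. Evaluation contexts $E ::= \Box \mid E\,v$. Top-level contexts $S ::= \Box \mid \lambda.S$. $\mathrm{Count}(\Box)=\mathrm{zero}$, $\mathrm{Count}(\lambda.S)=\mathrm{succ}(\mathrm{Count}(S))$. Rules: ($\beta$) $S[E[(\lambda x.v)\,v']] \mapsto_S S[E[v[v'/x]]]$; (non-$\beta$) $S[\lambda x.v] \mapsto_S S[\lambda.v[\mathrm{Count}(S)/x]]$. Readback rule: $S[\lambda.v] \hookrightarrow S[\lambda x.v[x/\mathrm{Count}(S)]]$ with $x$ fresh, where $v[x/i]$ replaces every occurrence of index $i$ in $v$ by $x$. A top-level term $S[v]$ is legal iff every index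 $i$ occurring in $v$ satisfies $i<\mathrm{Count}(S)$. Named semantics $\mapsto_T$. Evaluation contexts $E ::= \Box \mid E\,v$; top-level contexts $S ::= E \mid \lambda x.S$; rule $S[(\lambda x.v)\,v'] \mapsto_T S[v[v'/x]]$. Translations: for a legal top-level term $t$, $t^*$ is the (pure $\lambda$-term) normal form of $t$ with respect to the readback rule $\hookrightarrow$; for a pure $\lambda$-term $v$, $v^\#$ is the normal form of $v$ with respect to the non-$\beta$ rule of $\mapsto_S$. *)

(* Lambda-terms are represented with de Bruijn indices for
   variables (so alpha-equivalent terms are syntactically equal, and
   capture-avoiding substitution is the usual de Bruijn substitution).
   Free variables of open terms are "dangling" de Bruijn indices.
   The "indices" i ::= zero | succ(i) of the indexed semantics are nats. *)
From Stdlib Require Import Arith Relations.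

(* Terms v ::= x | v v | \x.v | i   (pure terms are those without indices) *)
Inductive tm : Type :=
| var (n : nat)
| app (a b : tm)
| lam (b : tm)           (* \x.v  (named lambda) *)
| ind (i : nat).

(* Top-level terms  t ::= v | \.t *)
Inductive top : Type :=
| Tv (v : tm)
| Tlam (t : top).

Fixpoint lift (k : nat) (t : tm) : tm :=
  match t with
  | var n => if k <=? n then var (S n) else var n
  | app a b => app (lift k a) (lift k b)
  | lam b => lam (lift (S k) b)
  | ind i => ind i
  end.

Fixpoint subst (k : nat) (u : tm) (t : tm) : tm :=
  match t with
  | var n => if n =? k then u else if k <? n then var (pred n) else var n
  | app a b => app (subst k u a) (subst k u b)
  | lam b => lam (subst (S k) (lift 0 u) b)
  | ind i => ind i
  end.

(* v[v'/x] where \x.v = lam b *)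
Definition inst (b u : tm) : tm := subst 0 u b.

(* v[x/i] followed by binding x at depth k: replaces index i by the
   variable bound at depth k (other free variables are shifted) *)
Fixpoint close (k i : nat) (t : tm) : tm :=
  match t with
  | var n => if k <=? n then var (S n) else var n
  | app a b => app (close k i a) (close k i b)
  | lam b => lam (close (S k) i b)
  | ind j => if j =? i then var k else ind j
  end.

Fixpoint occurs (i : nat) (t : tm) : Prop :=
  match t with
  | var _ => False
  | app a b => occurs i a \/ occurs i b
  | lam b => occurs i b
  | ind j => j = i
  end.

Definition pure (v : tm) : Prop := forall i, ~ occurs i v.

Inductive ectx : Type :=
| EHole
| EApp (E : ectx) (v : tm).

Fixpoint plugE (E : ectx) (t : tm) : tm :=
  match E with
  | EHole => t
  | EApp E v => app (plugE E t) v
  end.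

Inductive sctx : Type :=
| SHole
| SLam (Sc : sctx).

Fixpoint plugS (Sc : sctx) (t : top) : top :=
  match Sc with
  | SHole => t
  | SLam Sc' => Tlam (plugS Sc' t)
  end.

Fixpoint Count (Sc : sctx) : nat :=
  match Sc with
  | SHole => 0
  | SLam S' => Datatypes.S (Count S')
  end.

Definition legal (t : top) : Prop :=
  forall Sc v, t = plugS Sc (Tv v) -> forall i, occurs i v -> i < Count Sc.

(* the non-beta rule  S[\x.v] |->_S S[\.v[Count(S)/x]] *)
Inductive nonbeta : top -> top -> Prop :=
| nonbeta_step Sc b :
    nonbeta (plugS Sc (Tv (lam b)))
            (plugS Sc (Tlam (Tv (inst b (ind (Count Sc)))))).

Inductive stepS : top -> top -> Prop :=
| stepS_beta Sc E b u :
    stepS (plugS Sc (Tv (plugE E (app (lam b) u))))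
          (plugS Sc (Tv (plugE E (inst b u))))
| stepS_nonbeta t t' : nonbeta t t' -> stepS t t'.

(* the readback rule  S[\.v] ~> S[\x.v[x/Count(S)]] *)
Inductive readback : top -> top -> Prop :=
| readback_step Sc v :
    readback (plugS Sc (Tlam (Tv v)))
             (plugS Sc (Tv (lam (close 0 (Count Sc) v)))).

Inductive tctx : Type :=
| TE (E : ectx)
| TLam (Sc : tctx).

Fixpoint plugT (Sc : tctx) (t : tm) : tm :=
  match Sc with
  | TE E => plugE E t
  | TLam Sc' => lam (plugT Sc' t)
  end.

Inductive stepT : tm -> tm -> Prop :=
| stepT_beta Sc b u : stepT (plugT Sc (app (lam b) u)) (plugT Sc (inst b u)).

Definition star {A : Type} (R : A -> A -> Prop) : A -> A -> Prop :=
  clos_refl_trans A R.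

Definition normal_form {A : Type} (R : A -> A -> Prop) (a b : A) : Prop :=
  star R a b /\ forall c, ~ R b c.

(* t^* = u  and  v^# = t *)
Definition star_tr (t : top) (u : tm) : Prop := normal_form readback t (Tv u).
Definition sharp_tr (v : tm) (t : top) : Prop := normal_form nonbeta (Tv v) t.

From Stdlib Require Import Arith Relations Lia.

(** Every top-level term has the form [λ.^n v]. The non-β rule opens the
    outermost named binder of [v] into the index [n], the readback rule
    closes the index [n-1] of [λ.^n v] under a named binder, and on legal
    terms these two steps are inverse to each other. Both relations are
    deterministic, so [t^*] closes all top-level indices of [t], [v^#] opens
    all outer binders of [v], and (3) follows because each translation undoes
    the other. Closing an index and opening a binder both commute with
    substitution, hence with β-contraction: a β-step of [λ.^n v] is a β-step
    of [t^*] under [n] binders, while non-β steps do not change [t^*]; and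
    opening the outer binders of a named β-redex in context yields an indexed
    β-redex in context, whose contractum opens further to [v'^#]. *)

Definition deterministic {A : Type} (R : A -> A -> Prop) : Prop :=
  forall a b c, R a b -> R a c -> b = c.

Lemma star_incl {A : Type} (R R' : A -> A -> Prop) :
  (forall x y, R x y -> R' x y) -> forall a b, star R a b -> star R' a b.
Proof.
  intros HRR' a b Hab.
  induction Hab; [apply rt_step; auto | apply rt_refl | eapply rt_trans; eauto].
Qed.

Lemma star_transp {A : Type} (R R' : A -> A -> Prop) :
  (forall x y, R x y -> R' y x) -> forall a b, star R a b -> star R' b a.
Proof.
  intros HRR' a b Hab.
  induction Hab; [apply rt_step; auto | apply rt_refl | eapply rt_trans; eauto].
Qed.

Lemma deterministic_star_to_normal {A : Type} (R : A -> A -> Prop) :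
  deterministic R -> forall a b c,
  star R a b -> (forall d, ~ R b d) -> star R a c -> star R c b.
Proof.
  intros Rdet a b c Hab Nb Hac.
  apply clos_rt_rt1n in Hab. apply clos_rt_rt1n in Hac. revert c Hac.
  induction Hab as [x | x x' b Rxx' Hx'b IH]; intros c Hxc.
  - destruct Hxc as [| x'' c Rxx'' _]; [apply rt_refl | exfalso; eapply Nb; eauto].
  - destruct Hxc as [| x'' c Rxx'' Hx''c].
    + apply rt_trans with x'; [apply rt_step | apply clos_rt1n_rt]; assumption.
    + rewrite (Rdet _ _ _ Rxx'' Rxx') in Hx''c. exact (IH Nb c Hx''c).
Qed.

Lemma normal_form_unique {A : Type} (R : A -> A -> Prop) a b c :
  deterministic R -> normal_form R a b -> normal_form R a c -> b = c.
Proof.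
  intros Rdet [Hab Nb] [Hac Nc].
  pose proof (deterministic_star_to_normal R Rdet a b c Hab Nb Hac) as Hcb.
  apply clos_rt_rt1n in Hcb.
  destruct Hcb as [| c' b Rcc' _]; [reflexivity | exfalso; eapply Nc; eauto].
Qed.

Ltac nat_cases :=
  repeat (simpl in *; match goal with
  | |- context [?a <=? ?b] => destruct (Nat.leb_spec a b)
  | |- context [?a =? ?b] => destruct (Nat.eqb_spec a b)
  | |- context [?a <? ?b] => destruct (Nat.ltb_spec a b)
  | |- context [match ?n with 0 => _ | S _ => _ end] => destruct n
  end); try reflexivity; try lia; try (f_equal; lia).

Lemma subst_ind_lift u i c j : c <= j ->
  subst (S j) (ind i) (lift c u) = lift c (subst j (ind i) u).
Proof.
  revert c j; induction u; intros c j Hcj; simpl;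
    [nat_cases | rewrite IHu1, IHu2 by lia | rewrite IHu by lia | ]; reflexivity.
Qed.

Lemma subst_ind_subst b u n j i : n <= j ->
  subst j (ind i) (subst n u b) = subst n (subst j (ind i) u) (subst (S j) (ind i) b).
Proof.
  revert u n j; induction b; intros u n' j Hnj; simpl.
  - nat_cases.
  - rewrite IHb1, IHb2 by lia; reflexivity.
  - rewrite IHb, subst_ind_lift by lia; reflexivity.
  - reflexivity.
Qed.

Lemma close_lift u i c j : c <= j ->
  close (S j) i (lift c u) = lift c (close j i u).
Proof.
  revert c j; induction u; intros c j Hcj; simpl;
    [nat_cases | rewrite IHu1, IHu2 by lia; reflexivity
    | rewrite IHu by lia; reflexivity | nat_cases].
Qed.

Lemma close_subst b u n j i : n <= j ->
  close j i (subst n u b) = subst n (close j i u) (close (S j) i b).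
Proof.
  revert u n j; induction b; intros u n' j Hnj; simpl.
  - nat_cases.
  - rewrite IHb1, IHb2 by lia; reflexivity.
  - rewrite IHb, close_lift by lia; reflexivity.
  - nat_cases.
Qed.

Lemma subst_close v k i : subst k (ind i) (close k i v) = v.
Proof.
  revert k; induction v; intros k; simpl;
    [nat_cases | rewrite IHv1, IHv2; reflexivity | rewrite IHv; reflexivity | nat_cases].
Qed.

Lemma close_subst_fresh b k i : ~ occurs i b -> close k i (subst k (ind i) b) = b.
Proof.
  revert k; induction b; intros k Hi; simpl in *;
    [nat_cases | rewrite IHb1, IHb2 by tauto; reflexivity
    | rewrite IHb by tauto; reflexivity | nat_cases].
Qed.

Lemma occurs_lift u i c : occurs i (lift c u) -> occurs i u.
Proof.
  revert c; induction u; intros c Hi; simpl in *.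
  - destruct (c <=? n); contradiction.
  - destruct Hi; [left | right]; eauto.
  - eauto.
  - assumption.
Qed.

Lemma occurs_subst b u k i : occurs i (subst k u b) -> occurs i b \/ occurs i u.
Proof.
  revert u k; induction b; intros u k Hi; simpl in *.
  - destruct (n =? k); [auto |]. destruct (k <? n); contradiction.
  - destruct Hi as [Hi | Hi]; [apply IHb1 in Hi | apply IHb2 in Hi]; tauto.
  - apply IHb in Hi as [Hi | Hi]; [auto | right; eapply occurs_lift; eauto].
  - auto.
Qed.

Lemma occurs_plugE i E x y :
  (occurs i x -> occurs i y) -> occurs i (plugE E x) -> occurs i (plugE E y).
Proof. intros Hxy; induction E; simpl; tauto. Qed.

Fixpoint Tlams (n : nat) (t : top) : top :=
  match n with 0 => t | S n' => Tlam (Tlams n' t) end.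

Fixpoint SLams (n : nat) : sctx :=
  match n with 0 => SHole | S n' => SLam (SLams n') end.

Lemma plugS_Tlams Sc t : plugS Sc t = Tlams (Count Sc) t.
Proof. induction Sc; simpl; congruence. Qed.

Lemma Count_SLams n : Count (SLams n) = n.
Proof. induction n; simpl; congruence. Qed.

Lemma plugS_SLams n t : plugS (SLams n) t = Tlams n t.
Proof. rewrite plugS_Tlams, Count_SLams; reflexivity. Qed.

Lemma Tlams_Tlam n t : Tlams n (Tlam t) = Tlams (S n) t.
Proof. induction n; simpl in *; congruence. Qed.

Lemma Tlams_Tv_inj n m x y : Tlams n (Tv x) = Tlams m (Tv y) -> n = m /\ x = y.
Proof.
  revert m; induction n; destruct m; simpl; intros Heq; inversion Heq; auto.
  destruct (IHn m H0); auto.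
Qed.

Lemma top_Tlams t : exists n v, t = Tlams n (Tv v).
Proof.
  induction t as [v | t [n [v ->]]]; [exists 0, v | exists (S n), v]; reflexivity.
Qed.

Lemma nonbeta_inv t t' : nonbeta t t' ->
  exists n b, t = Tlams n (Tv (lam b)) /\ t' = Tlams (S n) (Tv (inst b (ind n))).
Proof.
  intros [Sc b]. exists (Count Sc), b. rewrite !plugS_Tlams, Tlams_Tlam. auto.
Qed.

Lemma nonbeta_Tlams n b : nonbeta (Tlams n (Tv (lam b))) (Tlams (S n) (Tv (inst b (ind n)))).
Proof.
  pose proof (nonbeta_step (SLams n) b) as Hstep.
  rewrite !plugS_SLams, Count_SLams, Tlams_Tlam in Hstep. exact Hstep.
Qed.

Lemma readback_inv t t' : readback t t' ->
  exists n v, t = Tlams (S n) (Tv v) /\ t' = Tlams n (Tv (lam (close 0 n v))).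
Proof.
  intros [Sc v]. exists (Count Sc), v. rewrite !plugS_Tlams, Tlams_Tlam. auto.
Qed.

Lemma readback_Tlams n v : readback (Tlams (S n) (Tv v)) (Tlams n (Tv (lam (close 0 n v)))).
Proof.
  pose proof (readback_step (SLams n) v) as Hstep.
  rewrite !plugS_SLams, Count_SLams, Tlams_Tlam in Hstep. exact Hstep.
Qed.

Lemma stepS_beta_Tlams n E b u :
  stepS (Tlams n (Tv (plugE E (app (lam b) u)))) (Tlams n (Tv (plugE E (inst b u)))).
Proof.
  pose proof (stepS_beta (SLams n) E b u) as Hstep.
  rewrite !plugS_SLams in Hstep. exact Hstep.
Qed.

Lemma stepS_inv t t' : stepS t t' ->
  (exists n E b u, t = Tlams n (Tv (plugE E (app (lam b) u)))
                /\ t' = Tlams n (Tv (plugE E (inst b u))))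
  \/ nonbeta t t'.
Proof.
  intros [Sc E b u | t0 t0' Hnb]; [left | right; exact Hnb].
  exists (Count Sc), E, b, u. rewrite !plugS_Tlams. auto.
Qed.

Lemma nonbeta_deterministic : deterministic nonbeta.
Proof.
  intros a b c Hab Hac.
  apply nonbeta_inv in Hab as (n & b1 & -> & ->).
  apply nonbeta_inv in Hac as (m & b2 & Heq & ->).
  apply Tlams_Tv_inj in Heq as [-> Heq]. injection Heq as ->. reflexivity.
Qed.

Lemma readback_deterministic : deterministic readback.
Proof.
  intros a b c Hab Hac.
  apply readback_inv in Hab as (n & v1 & -> & ->).
  apply readback_inv in Hac as (m & v2 & Heq & ->).
  apply Tlams_Tv_inj in Heq as [Hnm ->]. injection Hnm as ->. reflexivity.
Qed.

Lemma legal_Tlams_iff n v : legal (Tlams n (Tv v)) <-> (forall i, occurs i v -> i < n).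
Proof.
  split.
  - intros Hlegal i Hi. specialize (Hlegal (SLams n) v).
    rewrite plugS_SLams, Count_SLams in Hlegal. auto.
  - intros Hv Sc v' Heq i Hi. rewrite plugS_Tlams in Heq.
    apply Tlams_Tv_inj in Heq as [-> ->]. auto.
Qed.

Lemma legal_stepS t t' : legal t -> stepS t t' -> legal t'.
Proof.
  intros Hlegal Hstep.
  apply stepS_inv in Hstep as [(n & E & b & u & -> & ->) | Hnb].
  - rewrite legal_Tlams_iff in *. intros i Hi. apply Hlegal.
    revert Hi; apply occurs_plugE; intros Hi.
    apply occurs_subst in Hi. simpl; tauto.
  - apply nonbeta_inv in Hnb as (n & b & -> & ->). rewrite legal_Tlams_iff in *.
    intros i Hi. apply occurs_subst in Hi as [Hi | Hi]; simpl in *.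
    + specialize (Hlegal i Hi). lia.
    + lia.
Qed.

Lemma legal_star t t' : legal t -> star stepS t t' -> legal t'.
Proof.
  intros Hlegal Hstar. induction Hstar; eauto using legal_stepS.
Qed.

Lemma readback_nonbeta t t' : readback t t' -> nonbeta t' t.
Proof.
  intros Hrb. apply readback_inv in Hrb as (n & v & -> & ->).
  pose proof (nonbeta_Tlams n (close 0 n v)) as Hnb.
  unfold inst in Hnb. rewrite subst_close in Hnb. exact Hnb.
Qed.

(** Legality is needed: the index [n] must not already occur in [v]. *)
Lemma nonbeta_readback t t' : legal t -> nonbeta t t' -> readback t' t.
Proof.
  intros Hlegal Hnb. apply nonbeta_inv in Hnb as (n & b & -> & ->).
  rewrite legal_Tlams_iff in Hlegal.
  pose proof (readback_Tlams n (inst b (ind n))) as Hrb.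
  unfold inst in Hrb. rewrite close_subst_fresh in Hrb; [exact Hrb |].
  intros Hn. specialize (Hlegal n Hn). lia.
Qed.

Lemma star_nonbeta_readback t t' : legal t -> star nonbeta t t' -> star readback t' t.
Proof.
  intros Hlegal Hstar. apply clos_rt_rt1n in Hstar.
  induction Hstar as [t | t t1 t' Hnb _ IH]; [apply rt_refl |].
  apply rt_trans with t1.
  - apply IH. eapply legal_stepS; [exact Hlegal | apply stepS_nonbeta, Hnb].
  - apply rt_step, nonbeta_readback; assumption.
Qed.

(** * The translation [t^*] *)

Fixpoint close_lams (n : nat) (v : tm) : tm :=
  match n with 0 => v | S n' => close_lams n' (lam (close 0 n' v)) end.

Lemma star_readback_Tlams n v : star readback (Tlams n (Tv v)) (Tv (close_lams n v)).
Proof.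
  revert v; induction n; intros v; simpl; [apply rt_refl |].
  eapply rt_trans; [apply rt_step, readback_Tlams | apply IHn].
Qed.

Lemma readback_Tv_normal v t : ~ readback (Tv v) t.
Proof. intros Hrb. apply readback_inv in Hrb as (n & w & Heq & _). discriminate. Qed.

Lemma star_tr_Tlams n v : star_tr (Tlams n (Tv v)) (close_lams n v).
Proof. split; [apply star_readback_Tlams | apply readback_Tv_normal]. Qed.

Lemma star_tr_exists t : exists u, star_tr t u.
Proof. destruct (top_Tlams t) as (n & v & ->). eexists; apply star_tr_Tlams. Qed.

Lemma star_tr_unique t u u' : star_tr t u -> star_tr t u' -> u = u'.
Proof.
  intros Hu Hu'. pose proof (normal_form_unique _ _ _ _ readback_deterministic Hu Hu').
  congruence.
Qed.

Lemma star_tr_Tlams_eq n v u : star_tr (Tlams n (Tv v)) u -> u = close_lams n v.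
Proof. intros Hu. exact (star_tr_unique _ _ _ Hu (star_tr_Tlams n v)). Qed.

Lemma star_tr_readback t t' u : readback t t' -> star_tr t' u -> star_tr t u.
Proof. intros Hrb [Hstar Hnf]. split; [eapply rt_trans; [apply rt_step |]; eauto | exact Hnf]. Qed.

Fixpoint closeE (k i : nat) (E : ectx) : ectx :=
  match E with EHole => EHole | EApp E v => EApp (closeE k i E) (close k i v) end.

Lemma close_plugE k i E x : close k i (plugE E x) = plugE (closeE k i E) (close k i x).
Proof. induction E; simpl; congruence. Qed.

Lemma stepT_lam x y : stepT x y -> stepT (lam x) (lam y).
Proof. intros [Sc b u]. exact (stepT_beta (TLam Sc) b u). Qed.

Lemma stepT_close x y k i : stepT x y -> stepT (close k i x) (close k i y).
Proof.
  intros [Sc b u]. revert k; induction Sc; intros k; simpl.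
  - rewrite !close_plugE; simpl. unfold inst. rewrite close_subst by lia.
    exact (stepT_beta (TE (closeE k i E)) _ _).
  - apply stepT_lam, IHSc.
Qed.

Lemma stepT_close_lams n x y : stepT x y -> stepT (close_lams n x) (close_lams n y).
Proof.
  revert x y; induction n; intros x y Hxy; simpl; [exact Hxy |].
  apply IHn, stepT_lam, stepT_close, Hxy.
Qed.

Lemma stepS_star_tr t t' u u' : legal t -> stepS t t' ->
  star_tr t u -> star_tr t' u' -> star stepT u u'.
Proof.
  intros Hlegal Hstep Hu Hu'.
  apply stepS_inv in Hstep as [(n & E & b & w & -> & ->) | Hnb].
  - apply star_tr_Tlams_eq in Hu as ->. apply star_tr_Tlams_eq in Hu' as ->.
    apply rt_step, stepT_close_lams. exact (stepT_beta (TE E) b w).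
  - assert (Hu1 : star_tr t' u) by (eapply star_tr_readback;
      [apply nonbeta_readback; eassumption | exact Hu]).
    rewrite (star_tr_unique t' u u' Hu1 Hu'). apply rt_refl.
Qed.

Lemma star_stepS_star_tr t t' u u' : legal t -> star stepS t t' ->
  star_tr t u -> star_tr t' u' -> star stepT u u'.
Proof.
  intros Hlegal Hstar. revert u u' Hlegal.
  induction Hstar as [t t' Hstep | t | t t1 t' H1 IH1 H2 IH2]; intros u u' Hlegal Hu Hu'.
  - eapply stepS_star_tr; eauto.
  - rewrite (star_tr_unique t u u' Hu Hu'). apply rt_refl.
  - destruct (star_tr_exists t1) as [u1 Hu1]. apply rt_trans with u1.
    + eapply IH1; eauto.
    + eapply IH2; eauto. eapply legal_star; eauto.
Qed.

(** * The translation [v^#] *)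

Fixpoint lams (m : nat) (x : tm) : tm :=
  match m with 0 => x | S m' => lam (lams m' x) end.

(** [open_lams k m x] instantiates the [m] outer binders of [lams m x]
    (innermost first) by the indices [k, …, k+m-1]. *)
Fixpoint open_lams (k m : nat) (x : tm) : tm :=
  match m with 0 => x | S m' => open_lams (S k) m' (subst m' (ind k) x) end.

Definition not_lam (x : tm) : Prop := forall b, x <> lam b.

Lemma subst_lams m j k x : subst j (ind k) (lams m x) = lams m (subst (m + j) (ind k) x).
Proof.
  revert j; induction m; intros j; simpl; [reflexivity |].
  rewrite IHm, Nat.add_succ_r. reflexivity.
Qed.

Lemma star_nonbeta_lams m k x :
  star nonbeta (Tlams k (Tv (lams m x))) (Tlams (k + m) (Tv (open_lams k m x))).
Proof.
  revert k x; induction m; intros k x.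
  - rewrite Nat.add_0_r. apply rt_refl.
  - eapply rt_trans; [apply rt_step, nonbeta_Tlams |].
    unfold inst. rewrite subst_lams, Nat.add_0_r, <- Nat.add_succ_comm. apply IHm.
Qed.

Lemma not_lam_subst_ind x j k : not_lam x -> not_lam (subst j (ind k) x).
Proof.
  intros Hx b Heq. destruct x; simpl in Heq; try discriminate.
  - destruct (n =? j); [discriminate |]. destruct (j <? n); discriminate.
  - eapply Hx; eauto.
Qed.

Lemma not_lam_open_lams m k x : not_lam x -> not_lam (open_lams k m x).
Proof.
  revert k x; induction m; intros k x Hx; simpl; [exact Hx |].
  apply IHm, not_lam_subst_ind, Hx.
Qed.

Lemma lams_not_lam_decomp v : exists m y, v = lams m y /\ not_lam y.
Proof.
  induction v as [n | a _ c _ | b [m [y [-> Hy]]] | i].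
  1, 2, 4: exists 0; eexists; split; [reflexivity | intros b' Heq; discriminate].
  exists (S m), y; auto.
Qed.

Lemma nonbeta_normal_not_lam n y t : not_lam y -> ~ nonbeta (Tlams n (Tv y)) t.
Proof.
  intros Hy Hnb. apply nonbeta_inv in Hnb as (m & b & Heq & _).
  apply Tlams_Tv_inj in Heq as [_ Heq]. eapply Hy; eauto.
Qed.

Lemma sharp_tr_lams m y : not_lam y -> sharp_tr (lams m y) (Tlams m (Tv (open_lams 0 m y))).
Proof.
  intros Hy. split; [exact (star_nonbeta_lams m 0 y) |].
  intros t; apply nonbeta_normal_not_lam, not_lam_open_lams, Hy.
Qed.

Lemma sharp_tr_exists v : exists t, sharp_tr v t.
Proof.
  destruct (lams_not_lam_decomp v) as (m & y & -> & Hy). eexists; apply sharp_tr_lams, Hy.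
Qed.

Fixpoint substE (k : nat) (u : tm) (E : ectx) : ectx :=
  match E with EHole => EHole | EApp E v => EApp (substE k u E) (subst k u v) end.

Lemma subst_plugE k u E x : subst k u (plugE E x) = plugE (substE k u E) (subst k u x).
Proof. induction E; simpl; congruence. Qed.

Lemma open_lams_redex m k E b u : exists E' b' u',
  open_lams k m (plugE E (app (lam b) u)) = plugE E' (app (lam b') u') /\
  open_lams k m (plugE E (inst b u)) = plugE E' (inst b' u').
Proof.
  revert k E b u; induction m; intros k E b u; simpl; [exists E, b, u; auto |].
  rewrite !subst_plugE; simpl. unfold inst. rewrite subst_ind_subst by lia. apply IHm.
Qed.

Lemma plugT_lams Sc : exists m E, forall x, plugT Sc x = lams m (plugE E x).
Proof.
  induction Sc as [E | Sc (m & E & HSc)]; [exists 0, E; auto |].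
  exists (S m), E. intros x; simpl; rewrite HSc; reflexivity.
Qed.

Lemma plugE_app_not_lam E a c : not_lam (plugE E (app a c)).
Proof. intros b; destruct E; discriminate. Qed.

Lemma stepT_sharp_tr v v' w w' : stepT v v' ->
  sharp_tr v w -> sharp_tr v' w' -> star stepS w w'.
Proof.
  intros [Sc b u] Hw [Hw' Nw']. destruct (plugT_lams Sc) as (m & E & HSc).
  rewrite !HSc in *.
  destruct (open_lams_redex m 0 E b u) as (E' & b' & u' & Hredex & Hcontr).
  replace w with (Tlams m (Tv (plugE E' (app (lam b') u')))).
  2: { rewrite <- Hredex. symmetry. eapply normal_form_unique;
       [apply nonbeta_deterministic | exact Hw | apply sharp_tr_lams, plugE_app_not_lam]. }
  eapply rt_trans; [apply rt_step, stepS_beta_Tlams |].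
  apply (star_incl nonbeta); [apply stepS_nonbeta |].
  eapply deterministic_star_to_normal; [apply nonbeta_deterministic | exact Hw' | exact Nw' |].
  rewrite <- Hcontr. exact (star_nonbeta_lams m 0 (plugE E (inst b u))).
Qed.

Lemma star_stepT_sharp_tr v v' w w' : star stepT v v' ->
  sharp_tr v w -> sharp_tr v' w' -> star stepS w w'.
Proof.
  intros Hstar. revert w w'.
  induction Hstar as [v v' Hstep | v | v v1 v' H1 IH1 H2 IH2]; intros w w' Hw Hw'.
  - eapply stepT_sharp_tr; eauto.
  - rewrite (normal_form_unique _ _ _ _ nonbeta_deterministic Hw Hw'). apply rt_refl.
  - destruct (sharp_tr_exists v1) as [w1 Hw1].
    apply rt_trans with w1; [apply IH1 | apply IH2]; assumption.
Qed.

Lemma star_tr_sharp_tr t u w : star_tr t u -> sharp_tr u w -> star stepS t w.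
Proof.
  intros [Hu _] [Hw Nw]. apply (star_incl nonbeta); [apply stepS_nonbeta |].
  eapply deterministic_star_to_normal; [apply nonbeta_deterministic | exact Hw | exact Nw |].
  exact (star_transp readback nonbeta readback_nonbeta _ _ Hu).
Qed.

Lemma sharp_tr_star_tr v w u : pure v -> sharp_tr v w -> star_tr w u -> u = v.
Proof.
  intros Hpure [Hw _] Hu.
  assert (Hlegal : legal (Tv v)).
  { apply (legal_Tlams_iff 0). intros i Hi. exfalso; exact (Hpure i Hi). }
  apply (star_tr_unique w); [exact Hu |].
  split; [exact (star_nonbeta_readback _ _ Hlegal Hw) | apply readback_Tv_normal].
Qed.

Theorem theorem4 :
  (* the translations are well defined (presupposed by the notation) *)
  (forall t, legal t -> exists u, star_tr t u) /\
  (forall v, pure v -> exists t, sharp_tr v t) /\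
  (* (1) *)
  (forall t t' u u', legal t -> legal t' ->
     star stepS t t' -> star_tr t u -> star_tr t' u' -> star stepT u u') /\
  (* (2) *)
  (forall v v' w w', pure v -> pure v' ->
     star stepT v v' -> sharp_tr v w -> sharp_tr v' w' -> star stepS w w') /\
  (* (3) *)
  (forall t u w, legal t -> star_tr t u -> sharp_tr u w -> star stepS t w) /\
  (forall v w u, pure v -> sharp_tr v w -> star_tr w u -> u = v).
Proof.
  repeat split.
  - intros t _. apply star_tr_exists.
  - intros v _. apply sharp_tr_exists.
  - intros t t' u u' Hlegal _. apply star_stepS_star_tr, Hlegal.
  - intros v v' w w' _ _. apply star_stepT_sharp_tr.
  - intros t u w _. apply star_tr_sharp_tr.
  - apply sharp_tr_star_tr.
Qed.
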